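(* Let $f\colon S\to S$ be a dynamical system. The subsystem preorder of $f$ is a meet-semilattice: for any two subsystems $(f_1,p_1)$ and $(f_2,p_2)$ of $f$, with $f_i\colon S_i\to S_i$, there is a subsystem $(f_3,p_3)$ of $f$ with $f_3\colon S_3\to S_3$ (possibly trivial) such that $(f_3,p_3)\le(f_1,p_1)$ and $(f_3,p_3)\le(f_2,p_2)$, and such that whenever $(f_4,p_4)$ is a subsystem of $f$ with $(f_4,p_4)\le (f_1,p_1)$ and $(f_4,p_4)\le(f_2,p_2)$, then $(f_4,p_4)\le(f_3,p_3)$.
   Context: A dynamical system is a continuous bijection $f\colon S\to S$ of a topological space $S$. A subsystem of $f$ is a pair $(g,p)$ consisting of a dynamical system $g\colon B\to B$ and a surjection $p\colon S\to B$ (the subsystem projection) with $p\circ f=g\circ p$. The subsystem preorder on subsystems of $f$ is defined by $(g_1,p_1)\le(g_2,p_2)$ (with $p_i\colon S\to B_i$) iff there is a map $p_{1,2}\colon B_2\to B_1$ with $p_1=p_{1,2}\circ p_2$; then $g_1$ is a subsystem of $g_2$ via $p_{1,2}$. *)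

From mathcomp Require Import all_boot.
From mathcomp Require Import boolp classical_sets topology.

Set Implicit Arguments.
Unset Strict Implicit.
Unset Printing Implicit Defensive.

Definition dynsys (S : topologicalType) (f : S -> S) : Prop :=
  continuous f /\ bijective f.

Definition subsystem (S B : topologicalType) (f : S -> S) (g : B -> B)
    (p : S -> B) : Prop :=
  dynsys g /\ continuous p /\ (forall b : B, exists s : S, p s = b) /\
  p \o f = g \o p.

Definition subsys_le (S B1 B2 : topologicalType) (p1 : S -> B1)
    (p2 : S -> B2) : Prop :=
  exists p12 : B2 -> B1, continuous p12 /\ p1 = p12 \o p2.

From HB Require Import structures.
From Stdlib Require Import Relation_Operators.
From mathcomp Require Import all_boot.
From mathcomp Require Import boolp classical_sets topology.

(** The meet of [p1 : S -> S1] and [p2 : S -> S2] is their pushout: the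
    quotient of [S] by the equivalence relation generated by "same
    [p1]-fibre or same [p2]-fibre", with the finest topology making the
    induced maps [S1 -> S3] and [S2 -> S3] continuous.  Since [f] and its
    inverse are semiconjugate to maps of [S1] and of [S2], they preserve
    both kinds of fibres and descend to the quotient.  A common lower bound
    [p4] is constant on fibres of [p1] and of [p2], hence on classes, and
    factors continuously through the pushout by its universal property. *)

Set Implicit Arguments.
Unset Strict Implicit.
Unset Printing Implicit Defensive.

Local Open Scope classical_set_scope.
Local Open Scope quotient_scope.

Lemma clos_rst_fun_eq (A B : Type) (r : A -> A -> Prop) (g : A -> B) :
  (forall x y, r x y -> g x = g y) ->
  forall x y, clos_refl_sym_trans A r x y -> g x = g y.
Proof.
by move=> gr; apply: clos_refl_sym_trans_ind => // x y z _ -> _ ->.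
Qed.

Lemma semiconj_inv (A B : Type) (p : A -> B) (f g : A -> A) (f1 g1 : B -> B) :
  cancel g f -> cancel f1 g1 -> p \o f = f1 \o p -> p \o g = g1 \o p.
Proof.
move=> gK f1K pf; apply: funext => a /=.
by rewrite -[in RHS](gK a) -[p (f _)]/((p \o f) _) pf /= f1K.
Qed.

Definition final_topology (T : Type) (I : Type) (X : I -> topologicalType)
  of (forall i, X i -> T) : Type := T.

Section FinalTopology.
Variables (T : choiceType) (I : Type) (X : I -> topologicalType).
Variable q : forall i, X i -> T.
Arguments q : clear implicits.
Local Notation F := (final_topology q).

HB.instance Definition _ := Choice.copy F T.

Definition final_open (U : set F) : Prop := forall i, open (q i @^-1` U).

Lemma final_openT : final_open setT.
Proof. by move=> i; exact: openT. Qed.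

Lemma final_openI : setI_closed final_open.
Proof. by move=> U V oU oV i; apply: openI. Qed.

Lemma final_open_bigcup (J : Type) (U : J -> set F) :
  (forall j, final_open (U j)) -> final_open (\bigcup_j U j).
Proof.
move=> oU i; rewrite preimage_bigcup.
by apply: bigcup_open => j _; exact: oU.
Qed.

HB.instance Definition _ :=
  isOpenTopological.Build F final_openT final_openI final_open_bigcup.

Lemma final_continuous i : continuous (q i : X i -> F).
Proof. by apply/continuousP => U; apply. Qed.

Lemma final_continuousP (Z : topologicalType) (g : F -> Z) :
  continuous g <-> forall i, continuous (g \o q i).
Proof.
split=> [gc i x|gqc].
  by apply: continuous_comp; [exact: final_continuous|exact: gc].
apply/continuousP => A oA; suff : final_open (g @^-1` A) by [].
by move=> i; rewrite -comp_preimage; move/continuousP: (gqc i); apply.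
Qed.

End FinalTopology.

Section Pushout.
Variables (S S1 S2 : topologicalType) (p1 : S -> S1) (p2 : S -> S2).
Hypotheses (p1_surj : forall b, exists s, p1 s = b)
  (p2_surj : forall b, exists s, p2 s = b).

Definition common_fibre (x y : S) : Prop := p1 x = p1 y \/ p2 x = p2 y.

Local Notation glued := (clos_refl_sym_trans S common_fibre).

Lemma glued_equiv_class : equiv_class_of (fun x y => `[< glued x y >]).
Proof.
split=> [x|x y|y x z /asboolP xy /asboolP yz]; first exact/asboolP/rst_refl.
  by apply/asboolP/asboolP; apply: rst_sym.
exact/asboolP/(rst_trans _ _ _ _ _ xy yz).
Qed.

Definition glue_equiv : equiv_rel S := EquivRelPack glued_equiv_class.

Local Notation Q := {eq_quot glue_equiv}.

Lemma pi_glued x y : glued x y -> \pi_Q x = \pi_Q y.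
Proof. by move=> xy; apply/eqmodP/asboolP. Qed.

Lemma glued_pi x y : \pi_Q x = \pi_Q y -> glued x y.
Proof. by move/eqmodP/asboolP. Qed.

Definition pushout_leg1 (b : S1) : Q := \pi_Q (sval (cid (p1_surj b))).
Definition pushout_leg2 (b : S2) : Q := \pi_Q (sval (cid (p2_surj b))).

Lemma pushout_leg1E s : pushout_leg1 (p1 s) = \pi_Q s.
Proof.
by rewrite /pushout_leg1; case: cid => x /= xs; apply/pi_glued/rst_step; left.
Qed.

Lemma pushout_leg2E s : pushout_leg2 (p2 s) = \pi_Q s.
Proof.
by rewrite /pushout_leg2; case: cid => x /= xs; apply/pi_glued/rst_step; right.
Qed.

Definition pushout_legs (b : bool) : (if b then S1 else S2) -> Q :=
  if b return (if b then S1 else S2) -> Q then pushout_leg1 else pushout_leg2.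

(* Not the quotient topology of [S]: that one can be strictly finer, since
   [p1] and [p2] need not be quotient maps, and then the legs fail to be
   continuous. *)
Definition pushout : topologicalType := final_topology pushout_legs.

Definition pushout_pi (s : S) : pushout := \pi_Q s.

Lemma pushout_pi_surj (z : pushout) : exists s, pushout_pi s = z.
Proof. by exists (repr z); rewrite /pushout_pi reprK. Qed.

Lemma pushout_leg1_continuous : continuous (pushout_leg1 : S1 -> pushout).
Proof. exact: (final_continuous (q := pushout_legs) (i := true)). Qed.

Lemma pushout_leg2_continuous : continuous (pushout_leg2 : S2 -> pushout).
Proof. exact: (final_continuous (q := pushout_legs) (i := false)). Qed.

Lemma pushout_pi_continuous : continuous p1 -> continuous pushout_pi.
Proof.
move=> p1c s; have -> : pushout_pi = pushout_leg1 \o p1.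
  by apply: funext => t /=; rewrite pushout_leg1E.
by apply: continuous_comp; [exact: p1c|exact: pushout_leg1_continuous].
Qed.

Lemma continuous_pushout (Y : topologicalType) (h : pushout -> Y)
    (k1 : S1 -> Y) (k2 : S2 -> Y) :
  continuous k1 -> continuous k2 ->
  (forall s, h (pushout_pi s) = k1 (p1 s)) ->
  (forall s, h (pushout_pi s) = k2 (p2 s)) -> continuous h.
Proof.
move=> k1c k2c hk1 hk2; apply/final_continuousP => -[].
  have -> // : h \o pushout_leg1 = k1.
  by apply: funext => b; have [s <-] := p1_surj b; rewrite /= pushout_leg1E hk1.
have -> // : h \o pushout_leg2 = k2.
by apply: funext => b; have [s <-] := p2_surj b; rewrite /= pushout_leg2E hk2.
Qed.

Definition pushout_lift (Y : Type) (g : S -> Y) (z : pushout) : Y := g (repr z).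

Lemma pushout_liftE (Y : Type) (g : S -> Y) :
  (forall x y, common_fibre x y -> g x = g y) ->
  forall s, pushout_lift g (pushout_pi s) = g s.
Proof.
move=> gc s; apply: (clos_rst_fun_eq gc); apply: glued_pi.
by rewrite reprK.
Qed.

Lemma common_fibre_semiconj (h : S -> S) (h1 : S1 -> S1) (h2 : S2 -> S2) :
  p1 \o h = h1 \o p1 -> p2 \o h = h2 \o p2 ->
  forall x y, common_fibre x y -> common_fibre (h x) (h y).
Proof.
move=> e1 e2 x y [] e; [left|right].
  by rewrite -[p1 (h x)]/((p1 \o h) x) -[p1 (h y)]/((p1 \o h) y) e1 /= e.
by rewrite -[p2 (h x)]/((p2 \o h) x) -[p2 (h y)]/((p2 \o h) y) e2 /= e.
Qed.

Lemma pushout_lift_semiconj (h : S -> S) (h1 : S1 -> S1) (h2 : S2 -> S2) :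
  p1 \o h = h1 \o p1 -> p2 \o h = h2 \o p2 ->
  forall s, pushout_lift (pushout_pi \o h) (pushout_pi s) = pushout_pi (h s).
Proof.
move=> e1 e2; apply: pushout_liftE => x y xy.
exact/pi_glued/rst_step/(common_fibre_semiconj e1 e2).
Qed.

Lemma pushout_subsystem (f : S -> S) (f1 : S1 -> S1) (f2 : S2 -> S2) :
  dynsys f -> subsystem f f1 p1 -> subsystem f f2 p2 ->
  subsystem f (pushout_lift (pushout_pi \o f)) pushout_pi.
Proof.
move=> [_ [g fK gK]] [[f1c [g1 f1K _]] [p1c [_ e1]]].
move=> [[f2c [g2 f2K _]] [_ [_ e2]]].
have fE := pushout_lift_semiconj e1 e2.
have gE := pushout_lift_semiconj (semiconj_inv gK f1K e1)
                                  (semiconj_inv gK f2K e2).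
split; [split; [|exists (pushout_lift (pushout_pi \o g))]|split].
- apply: (@continuous_pushout pushout _ (pushout_leg1 \o f1)
                                          (pushout_leg2 \o f2)).
  + move=> b; apply: continuous_comp; first exact: f1c.
    exact: pushout_leg1_continuous.
  + move=> b; apply: continuous_comp; first exact: f2c.
    exact: pushout_leg2_continuous.
  + by move=> s; rewrite fE /= -[f1 _]/((f1 \o p1) s) -e1 pushout_leg1E.
  + by move=> s; rewrite fE /= -[f2 _]/((f2 \o p2) s) -e2 pushout_leg2E.
- by move=> z; have [s <-] := pushout_pi_surj z; rewrite fE gE fK.
- by move=> z; have [s <-] := pushout_pi_surj z; rewrite gE fE gK.
- exact: pushout_pi_continuous p1c.
split; first exact: pushout_pi_surj.
by apply: funext => s /=; rewrite fE.
Qed.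

Lemma subsys_le_pushout1 : subsys_le pushout_pi p1.
Proof.
exists pushout_leg1; split; first exact: pushout_leg1_continuous.
by apply: funext => s /=; rewrite pushout_leg1E.
Qed.

Lemma subsys_le_pushout2 : subsys_le pushout_pi p2.
Proof.
exists pushout_leg2; split; first exact: pushout_leg2_continuous.
by apply: funext => s /=; rewrite pushout_leg2E.
Qed.

Lemma subsys_le_pushout (Y : topologicalType) (p : S -> Y) :
  subsys_le p p1 -> subsys_le p p2 -> subsys_le p pushout_pi.
Proof.
move=> [r1 [r1c e1]] [r2 [r2c e2]].
have pE : forall s, pushout_lift p (pushout_pi s) = p s.
  by apply: pushout_liftE => x y [] xy; [rewrite e1 /= xy|rewrite e2 /= xy].
exists (pushout_lift p); split; last by apply: funext => s /=; rewrite pE.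
apply: (continuous_pushout r1c r2c) => s.
  by rewrite pE e1.
by rewrite pE e2.
Qed.

End Pushout.

Theorem lemma6 (S : topologicalType) (f : S -> S) (hf : dynsys f)
    (S1 S2 : topologicalType) (f1 : S1 -> S1) (p1 : S -> S1)
    (f2 : S2 -> S2) (p2 : S -> S2)
    (h1 : subsystem f f1 p1) (h2 : subsystem f f2 p2) :
  exists (S3 : topologicalType) (f3 : S3 -> S3) (p3 : S -> S3),
    [/\ subsystem f f3 p3, subsys_le p3 p1, subsys_le p3 p2 &
      forall (S4 : topologicalType) (f4 : S4 -> S4) (p4 : S -> S4),
        subsystem f f4 p4 -> subsys_le p4 p1 -> subsys_le p4 p2 ->
        subsys_le p4 p3].
Proof.
have [_ [_ [p1_surj _]]] := h1; have [_ [_ [p2_surj _]]] := h2.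
pose pi := pushout_pi p1_surj p2_surj.
exists (pushout p1_surj p2_surj), (pushout_lift (pi \o f)), pi; split.
- exact: pushout_subsystem hf h1 h2.
- exact: subsys_le_pushout1.
- exact: subsys_le_pushout2.
- by move=> S4 f4 p4 _; exact: subsys_le_pushout.
Qed.
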